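(* Let $k\geq 0$ and \[F_k(x)=\sum_{l=0}^{k}B_{k-l}(x^{k+2})(x^{k+2}-1)^l\sum_{i=l}^{k}\binom{i}{l}x^{k+1-i}.\] For $0\le i\le k+1$ and $0\le j\le k+1$ let $f_k(i,j)$ denote the coefficient of $x^{(k+2)i+j}$ in $F_k(x)$. Then $f_k(i,0)=0$ for $0\leq i\leq k+1$, and $f_k(i,j+1)=t_k(i,j)$ for $0\leq i\leq k+1$ and $0\leq j\leq k$.
   Context: $B_n(y)=\sum_{\pi\in B_n}y^{\mathrm{des}_B(\pi)}$ is the type $B$ Eulerian polynomial: $B_n$ is the set of signed permutations $\pi_1\cdots\pi_n$ of $[n]$, and with $\pi_0=0$, $\mathrm{des}_B(\pi)$ counts $i\in\{0,\dots,n-1\}$ with $\pi_i>\pi_{i+1}$; $B_0=1$. Define \[\widetilde T_k(x)=\sum_{l=0}^{k}B_{k-l}(x^{k+1})(x^{k+1}-1)^l\sum_{i=l}^{k}\binom{i}{l}x^{k-i},\] and for $0\le i\le k+1$, $0\le j\le k$ let $t_k(i,j)$ be the coefficient of $x^{(k+1)i+j}$ in $\widetilde T_k(x)$. *)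

From mathcomp Require Import all_boot all_order all_algebra all_fingroup.
Set Implicit Arguments. Unset Strict Implicit. Unset Printing Implicit Defensive.
Import Order.TTheory GRing.Theory Num.Theory.
Local Open Scope ring_scope.

(* A signed permutation of [n] is a pair (sigma, eps) with sigma : 'S_n and
   eps : 'I_n -> bool (true = negative sign).  Its one-line notation is
   pi_1 ... pi_n with pi_{j+1} = (-1)^{eps j} * (sigma j + 1). *)
Definition signed_perm (n : nat) := ('S_n * {ffun 'I_n -> bool})%type.

Definition sp_val n (s : signed_perm n) (j : 'I_n) : int :=
  (if s.2 j then -1 else 1) * ((s.1 j).+1 : int).

Definition sp_word n (s : signed_perm n) : seq int :=
  0 :: [seq sp_val s j | j <- enum 'I_n].

Definition desB n (s : signed_perm n) : nat :=
  #|[set i : 'I_n | nth 0 (sp_word s) i.+1 < nth 0 (sp_word s) i]|.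

Definition Bpoly (n : nat) : {poly int} :=
  \sum_(s : signed_perm n) 'X^(desB s).

Definition Ttilde (k : nat) : {poly int} :=
  \sum_(l < k.+1)
    (Bpoly (k - l)%N \Po 'X^(k.+1)) * ('X^(k.+1) - 1) ^+ l *
    \sum_(l <= i < k.+1) ('C(i, l))%:R * 'X^(k - i)%N.

Definition tk (k i j : nat) : int := (Ttilde k)`_(k.+1 * i + j).

Definition Fk (k : nat) : {poly int} :=
  \sum_(l < k.+1)
    (Bpoly (k - l)%N \Po 'X^(k.+2)) * ('X^(k.+2) - 1) ^+ l *
    \sum_(l <= i < k.+1) ('C(i, l))%:R * 'X^(k.+1 - i)%N.

Definition fk (k i j : nat) : int := (Fk k)`_(k.+2 * i + j).

(* Both F_k and T~_k are sums of products (A \Po 'X^n) * S with A = B_{k-l}(x)(x-1)^l,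
   n = k+2 resp. k+1, and S of degree < n.  The coefficient of x^(n i + j), j < n, in
   such a product is A_i * S_j, so the coefficient grid of F_k is that of T~_k: the
   inner sum of F_k is x times the inner sum of T~_k, which shifts j by one and
   leaves column 0 empty. *)
From mathcomp Require Import all_boot all_order all_algebra all_fingroup.
From mathcomp Require Import zify.
Import GRing.Theory.
Local Open Scope ring_scope.

Lemma coef_comp_polyXn_mul (R : nzSemiRingType) (P Q : {poly R}) n m j :
  (size Q <= n)%N -> (j < n)%N -> ((P \Po 'X^n) * Q)`_(n * m + j) = P`_m * Q`_j.
Proof.
move=> /leq_sizeP szQ ltjn.
rewrite comp_polyE mulr_suml coef_sum.
under eq_bigr => i _ do rewrite -scalerAl coefZ -exprM coefXnM.
have off_m (i : nat) : i != m ->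
    P`_i * (if (n * m + j < n * i)%N then 0 else Q`_(n * m + j - n * i)) = 0.
  move=> neq_im; case: ifP => [_|le_i]; first by rewrite mulr0.
  have lt_im : (i < m)%N by move/negbT: le_i; move/eqP: neq_im; nia.
  by rewrite szQ ?mulr0 //; nia.
have [lt_m|le_m] := ltnP m (size P).
  rewrite (bigD1 (Ordinal lt_m)) //= big1 => [|i /= /off_m //].
  by rewrite addr0 ifF ?addKn //; nia.
rewrite nth_default // mul0r big1 // => i _; apply: off_m.
by apply: contraTneq (ltn_ord i) => ->; rewrite -leqNgt.
Qed.

Lemma mul_comp_polyXn_expXsub1 (R : comNzRingType) (B : {poly R}) n l :
  (B \Po 'X^n) * ('X^n - 1) ^+ l = (B * ('X - 1) ^+ l) \Po 'X^n.
Proof. by rewrite comp_polyM rmorphXn rmorphB /= comp_polyX comp_polyC. Qed.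

Section DescendingMonomialSum.

Variables (R : nzSemiRingType) (a : nat -> nat) (l k : nat).

Lemma size_sum_natmulXsub :
  (size (\sum_(l <= i < k.+1) (a i)%:R * 'X^(k - i) : {poly R})%R <= k.+1)%N.
Proof.
apply/leq_sizeP => t le_kt; rewrite coef_sum big_nat big1 // => i /andP[_ lt_ik].
by rewrite mulr_natl coefMn coefXn gtn_eqF ?mul0rn //; lia.
Qed.

Lemma sum_natmulXsubS :
  \sum_(l <= i < k.+1) (a i)%:R * 'X^(k.+1 - i)%N =
  'X * \sum_(l <= i < k.+1) (a i)%:R * 'X^(k - i)%N :> {poly R}.
Proof.
rewrite mulr_sumr !big_nat; apply: eq_bigr => i /andP[_ lt_ik].
by rewrite mulrA -commr_polyX -mulrA -exprS subSn.
Qed.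

Lemma size_X_sum_natmulXsub :
  (size ('X * \sum_(l <= i < k.+1) (a i)%:R * 'X^(k - i) : {poly R})%R <= k.+2)%N.
Proof.
apply: leq_trans (size_polyMleq _ _) _.
by rewrite size_polyX addSn /= ltnS size_sum_natmulXsub.
Qed.

End DescendingMonomialSum.

Theorem lemma3p2 (k : nat) :
  (forall i : nat, (i <= k.+1)%N -> fk k i 0 = 0) /\
  (forall i j : nat, (i <= k.+1)%N -> (j <= k)%N -> fk k i j.+1 = tk k i j).
Proof.
split=> [i _ | i j _ le_jk].
  rewrite /fk /Fk coef_sum big1 // => l _.
  rewrite sum_natmulXsubS mul_comp_polyXn_expXsub1.
  by rewrite coef_comp_polyXn_mul ?size_X_sum_natmulXsub // coefXM eqxx mulr0.
rewrite /fk /tk /Fk /Ttilde !coef_sum; apply: eq_bigr => l _.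
rewrite sum_natmulXsubS !mul_comp_polyXn_expXsub1.
rewrite coef_comp_polyXn_mul ?size_X_sum_natmulXsub //.
by rewrite coef_comp_polyXn_mul ?size_sum_natmulXsub // coefXM.
Qed.
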